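(* Let $a$ be a (strong) composition with $\ell(a)\le n$. Then $$G^{(\beta)}_a(x_1,\dots,x_n)=\sum_b\beta^{\mathrm{ex}(b)}F_{\mathtt{flat}(b)}(x_1,\dots,x_n),$$ where the sum is over all unsplit glides $b$ of $0^{n-\ell(a)}a$. In particular $G^{(\beta)}_a$ is quasisymmetric.
   Context: A (strong) composition has all entries positive; $\ell(a)$ is its number of entries; $0^m a$ is $a$ with $m$ zeros prepended. Glides: a weak komposition is a weak composition whose positive entries are colored black or red, $\mathrm{ex}(b)$ = number of red entries; for a weak composition or komposition, $\mathtt{flat}$ is the sequence of its nonzero entries (colors forgotten). For a weak composition $a'$ of length $n$ with nonzero entries exactly at positions $n_1<\dots<n_\ell$, a weak komposition $b$ of length $n$ is a glide of $a'$ if there exist $0=i_0<\dots<i_\ell$ with $i_j\le n_j$, $b_k=0$ for $k>i_\ell$, and for each $j$: $b_{i_{j-1}+1}+\dots+b_{i_j}=\mathtt{flat}(a')_j+\#\{\text{red entries among } b_{i_{j-1}+1},\dots,b_{i_j}\}$ and the first nonzero entry among them is black. $\mathcal{G}^{(\beta)}_{a'}(x_1,\dots,x_n)=\sum_b\beta^{\mathrm{ex}(b)}x^b$ over glides $b$ of $a'$. The quasisymmetric glide is $G^{(\beta)}_a(x_1,\dots,x_n)=\mathcal{G}^{(\beta)}_{0^{n-\ell(a)}a}$ if $\ell(a)\le n$ and $0$ otherwise. A glide $b$ of $a'$ is unsplit if $b$ has exactly as many nonzero black entries as $a'$ has nonzero entries, and no zero entry of $b$ lies to the right of a nonzero entry.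 The fundamental quasisymmetric polynomial is $F_\alpha(x_1,\dots,x_n)=\sum x^c$ over weak compositions $c$ of length $n$ with $\mathtt{flat}(c)$ refining $\alpha$ ($c'$ refines $\alpha$ if $\alpha$ is obtained by summing consecutive entries of $c'$). A polynomial is quasisymmetric if the coefficients of $x_{i_1}^{e_1}\cdots x_{i_k}^{e_k}$ and $x_{j_1}^{e_1}\cdots x_{j_k}^{e_k}$ agree for all $i_1<\dots<i_k$, $j_1<\dots<j_k$. *)

From mathcomp Require Import all_boot all_order all_algebra.
Set Implicit Arguments. Unset Strict Implicit. Unset Printing Implicit Defensive.
Import GRing.Theory.
Local Open Scope ring_scope.

(* Weak compositions are [seq nat]; positions are 0-based below (paper: 1-based).
   A weak komposition of length N is a pair (e, col) with e : seq nat the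
   entries and col : seq bool the colours (true = red).  Only positive entries
   carry a colour; zero entries are represented with colour false (black),
   so each komposition has a unique representation. *)

Definition flat (w : seq nat) : seq nat := [seq x <- w | x != 0%N].

(* 0-based positions of the nonzero entries of w (paper: n_j = this + 1) *)
Definition nzpos (w : seq nat) : seq nat :=
  [seq k <- iota 0 (size w) | nth 0%N w k != 0%N].

Definition kompo (N : nat) (e : seq nat) (col : seq bool) : bool :=
  [&& size e == N, size col == N &
      [forall k : 'I_N, nth false col k ==> (nth 0%N e k != 0%N)]].

Definition ex (col : seq bool) : nat := count id col.

Definition blocksum (e : seq nat) (lo hi : nat) : nat :=
  (\sum_(lo <= k < hi) nth 0%N e k)%N.
Definition blockred (col : seq bool) (lo hi : nat) : nat :=
  (\sum_(lo <= k < hi) nat_of_bool (nth false col k))%N.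

Definition first_nz_black (e : seq nat) (col : seq bool) (lo hi : nat) : bool :=
  [forall k : 'I_(size e),
     [&& (lo <= k < hi)%N, nth 0%N e k != 0%N &
         [forall k' : 'I_(size e), (lo <= k' < k)%N ==> (nth 0%N e k' == 0%N)]]
     ==> ~~ nth false col k].

(* (e,col) is a glide of a'.  The sequence 0 = i_0 < ... < i_l is encoded by
   a finite function i : 'I_(l+1) -> 'I_(N+1); block j (paper j+1) consists of
   0-based positions i_j <= k < i_(j+1). *)
Definition glide (a' e : seq nat) (col : seq bool) : bool :=
  let N := size a' in
  let l := size (flat a') in
  [exists i : {ffun 'I_l.+1 -> 'I_N.+1},
    let I := fun j : nat => nat_of_ord (i (inord j)) in
    [&& I 0%N == 0%N,
        [forall j : 'I_l, (I j < I j.+1)%N],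
        [forall j : 'I_l, (I j.+1 <= (nth 0%N (nzpos a') j).+1)%N],
        [forall k : 'I_N, (I l <= k)%N ==> (nth 0%N e k == 0%N)] &
        [forall j : 'I_l,
           (blocksum e (I j) (I j.+1) == nth 0%N (flat a') j + blockred col (I j) (I j.+1))%N
           && first_nz_black e col (I j) (I j.+1)]]].

Definition is_unsplit (a' e : seq nat) (col : seq bool) : bool :=
  let N := size a' in
  ((\sum_(k < N) nat_of_bool ((nth 0%N e k != 0%N) && ~~ nth false col k))%N
      == size (flat a'))
  && [forall k : 'I_N, forall k' : 'I_N,
        ((k < k')%N && (nth 0%N e k != 0%N)) ==> (nth 0%N e k' != 0%N)].

(* coefficient of x^e in the glide polynomial  calG^(beta)_{a'}(x_1..x_N),
   N = size a' : sum of beta^ex(b) over glides b whose underlying weak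
   composition is e (i.e. over admissible colourings of e). *)
Definition calG_coef (R : comNzRingType) (beta : R) (a' : seq nat) (e : seq nat) : R :=
  \sum_(c : (size a').-tuple bool | kompo (size a') e c && glide a' e c)
     beta ^+ ex c.

(* coefficient of x^e in the quasisymmetric glide G^(beta)_a(x_1..x_n) *)
Definition G_coef (R : comNzRingType) (beta : R) (a : seq nat) (n : nat) (e : seq nat) : R :=
  if (size a <= n)%N then calG_coef beta (nseq (n - size a) 0%N ++ a) e else 0.

(* c' refines alpha: alpha is obtained by summing (nonempty) consecutive
   blocks of c'; the block sizes are given by sh. *)
Definition refines (c' alpha : seq nat) : bool :=
  [exists sh : (size alpha).-tuple 'I_(size c').+1,
     let s := map (@nat_of_ord _) sh in
     [&& all (fun k => 0 < k)%N s, sumn s == size c' &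
         map sumn (reshape s c') == alpha]].

(* coefficient of x^c in F_alpha(x_1..x_n) *)
Definition F_coef (R : comNzRingType) (alpha : seq nat) (n : nat) (c : seq nat) : R :=
  ((size c == n) && refines (flat c) alpha)%:R.

(* exponent vector (length n) of x_{idx_1}^{es_1} ... x_{idx_k}^{es_k}, 0-based idx *)
Definition monomial (n : nat) (idx es : seq nat) : seq nat :=
  [seq (if k \in idx then nth 0%N es (index k idx) else 0%N) | k <- iota 0 n].

Definition quasisymmetric (R : comNzRingType) (n : nat) (f : seq nat -> R) : Prop :=
  forall (idx idx' es : seq nat),
    size idx = size es -> size idx' = size es ->
    all (fun e => 0 < e)%N es ->
    sorted ltn idx -> sorted ltn idx' ->
    all (fun k => k < n)%N idx -> all (fun k => k < n)%N idx' ->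
    f (monomial n idx es) = f (monomial n idx' es).

From mathcomp Require Import all_boot all_order all_algebra.
From mathcomp Require Import zify.
Set Implicit Arguments. Unset Strict Implicit. Unset Printing Implicit Defensive.

(* A glide of a zero-padded composition [0^k a] is determined by its nonzero
   entries, which split uniquely into consecutive blocks: block j starts with a
   black entry and sums to [a_j] plus its number of red entries.  Absorbing every
   black entry into its predecessor inside each block turns a glide into an
   unsplit glide u, each entry of u being the sum of a group of consecutive
   entries of the glide, of which only the first may be red.  Conversely u and a
   weak composition e with [flat e] refining [flat u] determine the colouring of
   e that splits u back.  So for every exponent e the glides with underlying
   weak composition e correspond, with the same number of red entries, to the
   unsplit glides u with [flat e] refining [flat u]: this is the expansion read
   coefficientwise.  Quasisymmetry follows since the coefficient of [x^c] in
   [F_alpha] depends only on [flat c]. *)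

Lemma unzip1_cat (S T : Type) (s1 s2 : seq (S * T)) :
  unzip1 (s1 ++ s2) = unzip1 s1 ++ unzip1 s2.
Proof. exact: map_cat. Qed.

Lemma unzip2_cat (S T : Type) (s1 s2 : seq (S * T)) :
  unzip2 (s1 ++ s2) = unzip2 s1 ++ unzip2 s2.
Proof. exact: map_cat. Qed.

(* An entry with its colour, [true] meaning red. *)
Notation cell := (nat * bool)%type.

Definition pos_cells (w : seq cell) := all (fun y => 0 < y.1) w.

(* Block sums count a red entry one less: [sumn = a_j + #red]. *)
Definition weight (y : cell) := y.1 - y.2.

Definition block_ok (x : nat) (p : seq cell) :=
  [&& p != [::], ~~ (head (0, true) p).2 & sumn (unzip1 p) == x + count snd p].

(* The block of weight [r] at the front of [w] extends up to the first black
   cell reached with no weight left; this makes the splitting unique. *)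
Fixpoint block_size (r : nat) (w : seq cell) : nat :=
  if w is y :: w' then
    if (r == 0) && ~~ y.2 then 0 else (block_size (r - weight y) w').+1
  else 0.

(* [w] lists the nonzero cells of a glide of [0^k a] (see [glide_paddedE]). *)
Fixpoint blocks_ok (a : seq nat) (w : seq cell) : bool :=
  if a is x :: a' then
    block_ok x (take (block_size x w) w) && blocks_ok a' (drop (block_size x w) w)
  else w == [::].

Definition head_black (q : seq cell) := (q == [::]) || ~~ (head (0, true) q).2.

Lemma pos_cells_cat p q : pos_cells (p ++ q) = pos_cells p && pos_cells q.
Proof. exact: all_cat. Qed.

Lemma sumn_weight p : pos_cells p -> sumn (map weight p) + count snd p = sumn (unzip1 p).
Proof.
elim: p => //= [[y b] p IH] /andP[/= y0 /IH <-]; rewrite /weight /=; case: b => /=; lia.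
Qed.

Lemma block_ok_weight x p : pos_cells p -> block_ok x p -> sumn (map weight p) = x.
Proof. by move=> pp /and3P[_ _ /eqP]; rewrite -(sumn_weight pp); lia. Qed.

Lemma block_size_cat p q :
  pos_cells p -> head_black q -> block_size (sumn (map weight p)) (p ++ q) = size p.
Proof.
elim: p => [_|[y b] p IH /andP[/= y0 pp] hq] /=.
  by case: q => //= [[y b] q]; rewrite /head_black /= => ->.
have -> : (y - b + sumn (map weight p) == 0) && ~~ b = false.
  by case: b => /=; [rewrite andbF | rewrite subn0; case: y y0].
by rewrite /weight /= addKn IH.
Qed.

Lemma block_size_block x p q : pos_cells p -> block_ok x p -> head_black q ->
  block_size x (p ++ q) = size p.
Proof. by move=> pp bp; rewrite -(block_ok_weight pp bp); apply: block_size_cat. Qed.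

Lemma blocks_ok_cat x a p q : pos_cells p -> block_ok x p -> head_black q ->
  blocks_ok (x :: a) (p ++ q) = blocks_ok a q.
Proof.
move=> pp bp hq /=; rewrite block_size_block //.
by rewrite take_size_cat // drop_size_cat // bp.
Qed.

Lemma blocks_ok_head_black a w : blocks_ok a w -> head_black w.
Proof.
case: a => [/eqP -> //|x a /= /andP[/and3P[ne hb _] _]].
by move: ne hb; rewrite /head_black; case: w => //= y w; case: ifP.
Qed.

Lemma blocks_ok_consP x a w : blocks_ok (x :: a) w ->
  exists p q, [/\ w = p ++ q, block_ok x p & blocks_ok a q].
Proof.
by move=> /= /andP[bp bq]; exists (take (block_size x w) w), (drop (block_size x w) w);
  rewrite cat_take_drop.
Qed.

Lemma blocks_ok_size a w : blocks_ok a w -> size a <= size w.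
Proof.
elim: a w => //= x a IH w /andP[/and3P[ne _ _] /IH].
rewrite size_drop; move: ne; case: (block_size x w) => [|m]; first by rewrite take0.
move=> ne; have : 0 < size (take m.+1 w) by case: (take _ _) ne.
by rewrite size_take; case: ifP => h; lia.
Qed.

Lemma blocks_ok_sumn a w : pos_cells w -> blocks_ok a w ->
  sumn (unzip1 w) = sumn a + count snd w.
Proof.
elim: a w => [|x a IH] w; first by move=> _ /eqP->.
move=> pw /blocks_ok_consP[p [q [E /and3P[_ _ /eqP sp] bq]]]; subst w.
move: pw; rewrite pos_cells_cat => /andP[_ pq].
by rewrite unzip1_cat sumn_cat count_cat sp (IH _ pq bq) /=; lia.
Qed.

Lemma blocks_ok_count_black a w : blocks_ok a w -> size a <= count (fun y => ~~ y.2) w.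
Proof.
elim: a w => [|x a IH] w //; case/blocks_ok_consP=> p [q [-> bp bq]].
rewrite count_cat /=; move: bp => /and3P[]; case: p => //= [[y b] p] _ /= -> _.
by have := IH _ bq; lia.
Qed.

(* Absorb every black cell into the cell before it. *)
Fixpoint glue (w : seq cell) : seq cell :=
  if w is x :: s then
    if glue s is y :: r then
      if y.2 then x :: y :: r else (x.1 + y.1, x.2) :: r
    else [:: x]
  else [::].

Lemma glue_cons x s : glue (x :: s) =
  if glue s is y :: r then if y.2 then x :: y :: r else (x.1 + y.1, x.2) :: r
  else [:: x].
Proof. by []. Qed.

Lemma glue_eq_nil s : (glue s == [::]) = (s == [::]).
Proof. by case: s => //= x s; case: (glue s) => // y r; case: ifP. Qed.

Lemma glue_head x s : exists y r, glue (x :: s) = (y, x.2) :: r.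
Proof.
rewrite /=; case: (glue s) => [|z r]; first by exists x.1, [::]; case: x.
by case: ifP => _; [exists x.1, (z :: r); case: x | exists (x.1 + z.1), r].
Qed.

Lemma sumn_glue s : sumn (unzip1 (glue s)) = sumn (unzip1 s).
Proof.
elim: s => //= x s; case: (glue s) => [|z r] /=; first by move <-.
by case: ifP => _ /= <-; lia.
Qed.

Lemma count_red_glue s : count snd (glue s) = count snd s.
Proof.
elim: s => //= x s; case: (glue s) => [|z r] /=; first by move <-.
by case: ifP => /= h <-; rewrite ?h /=; lia.
Qed.

Lemma glue_behead_red s : all snd (behead (glue s)).
Proof. by elim: s => //= x s; case: (glue s) => [|z r] //=; case: ifP => //= ->. Qed.

Lemma count_black_glue p : p != [::] -> ~~ (head (0, true) p).2 ->
  count (fun y => ~~ y.2) (glue p) = 1.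
Proof.
case: p => // x s _ xb; have [y [r E]] := glue_head x s.
have := glue_behead_red (x :: s); rewrite E /= xb /= => rr.
have -> // : count (fun y => ~~ y.2) r = 0.
by apply/eqP; rewrite eqn0Ngt -has_count; apply/hasPn => z /(allP rr) ->.
Qed.

Lemma glue_cat p q : q != [::] -> (head (0, false) q).2 -> glue (p ++ q) = glue p ++ glue q.
Proof.
move=> qn qr; elim: p => [|x p IH] //; rewrite cat_cons [glue (x :: _)]/= IH.
case: p IH => [|y p] IH.
  case: q qn qr IH => // z q _ zr _; have [y' [r E]] := glue_head z q.
  by rewrite cat0s E /= -E; move: zr => /= ->.
by have [y' [r E]] := glue_head y p; rewrite E [glue (x :: y :: p)]glue_cons E; case: (y.2).
Qed.

Definition group_cells (g : seq nat) (b : bool) : seq cell :=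
  zip g (b :: nseq (size g).-1 false).

Fixpoint refine_cells (gs : seq (seq nat)) (v : seq cell) : seq cell :=
  if (gs, v) is (g :: gs', y :: v') then group_cells g y.2 ++ refine_cells gs' v'
  else [::].

Definition pos_groups (gs : seq (seq nat)) :=
  all (fun g => (g != [::]) && all (fun x => 0 < x) g) gs.

Definition refinement gs v w :=
  [/\ pos_groups gs, size gs = size v, map sumn gs = unzip1 v & refine_cells gs v = w].

Lemma glue_group_cells g b : g != [::] -> glue (group_cells g b) = [:: (sumn g, b)].
Proof.
case: g => // x g _; rewrite /group_cells /=.
elim: g x b => [|y g IH] x b /=; first by rewrite addn0.
by rewrite IH /=; congr [:: (_, _)]; lia.
Qed.

Lemma unzip1_group_cells g b : unzip1 (group_cells g b) = g.
Proof. by rewrite unzip1_zip //= size_nseq; case: g. Qed.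

Lemma unzip2_group_cells g b : g != [::] ->
  unzip2 (group_cells g b) = b :: nseq (size g).-1 false.
Proof. by case: g => // x g _; rewrite unzip2_zip //= size_nseq. Qed.

Lemma refine_cells_cat gs1 gs2 v1 v2 : size gs1 = size v1 ->
  refine_cells (gs1 ++ gs2) (v1 ++ v2) = refine_cells gs1 v1 ++ refine_cells gs2 v2.
Proof. by elim: gs1 v1 => [|g gs IH] [|y v] //= [/IH ->]; rewrite catA. Qed.

Lemma unzip1_refine_cells gs v : size gs = size v -> unzip1 (refine_cells gs v) = flatten gs.
Proof.
elim: gs v => [|g gs IH] [|y v] //= [/IH].
by rewrite unzip1_cat unzip1_group_cells => ->.
Qed.

Lemma count_red_refine_cells gs v : pos_groups gs -> size gs = size v ->
  count snd (refine_cells gs v) = count snd v.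
Proof.
elim: gs v => [|g gs IH] [|y v] //= /andP[/andP[gn _] gg] [/(IH _ gg) <-].
rewrite count_cat -(count_map snd id) -/(unzip2 _) unzip2_group_cells //=.
by rewrite count_nseq mul0n addn0.
Qed.

Lemma pos_cells_refine_cells gs v : pos_groups gs -> pos_cells (refine_cells gs v).
Proof.
elim: gs v => [|g gs IH] [|y v] //= /andP[/andP[gn gp] gg].
rewrite pos_cells_cat IH // andbT /pos_cells -(all_map fst (fun x => 0 < x)).
by rewrite -/(unzip1 _) unzip1_group_cells.
Qed.

Lemma refine_cells_eq_nil gs v : pos_groups gs -> size gs = size v ->
  (refine_cells gs v == [::]) = (v == [::]).
Proof. by case: gs v => [|[|x g] gs] [|y v]. Qed.

Lemma head_refine_cells gs v : pos_groups gs -> size gs = size v ->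
  (head (0, true) (refine_cells gs v)).2 = (head (0, true) v).2.
Proof. by case: gs v => [|[|x g] gs] [|y v]. Qed.

Lemma glue_refine_cells gs v : pos_groups gs -> size gs = size v -> all snd (behead v) ->
  glue (refine_cells gs v) = zip (map sumn gs) (unzip2 v).
Proof.
elim: gs v => [|g gs IH] [|y v] //= /andP[/andP[gn _] gg] [sz] vr.
case: gs gg sz IH => [|g' gs] gg sz IH.
  by case: v sz vr => //= _ _; rewrite cats0 glue_group_cells.
case: v sz vr => //= y' v [sz] /andP[y'r vr].
have g'n : g' != [::] by case/andP: gg => /andP[].
rewrite glue_cat ?glue_group_cells //=; last by case: g' g'n {gg IH}.
- by rewrite -[group_cells g' _ ++ _]/(refine_cells (g' :: gs) (y' :: v)) IH //= ?sz // y'r.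
- by case: g' g'n {gg IH}.
Qed.

(* Assign colours to the entries [c] of a refinement of [v]: each group starts
   with the colour of its cell of [v], its other entries are black; [r] is
   what remains of the current group. *)
Fixpoint split_colors (r : nat) (c : seq nat) (v : seq cell) : seq bool :=
  if c is x :: c' then
    if r == 0 then
      if v is y :: v' then y.2 :: split_colors (y.1 - x) c' v'
      else false :: split_colors 0 c' [::]
    else false :: split_colors (r - x) c' v
  else [::].

Lemma split_colors_group g c v : all (fun x => 0 < x) g ->
  split_colors (sumn g) (g ++ c) v = nseq (size g) false ++ split_colors 0 c v.
Proof.
elim: g => //= x g IH /andP[x0 gp].
have -> : (x + sumn g == 0) = false by lia.
by rewrite addKn IH.
Qed.

Lemma split_colors_refine_cells gs v c v' : pos_groups gs -> map sumn gs = unzip1 v ->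
  split_colors 0 (flatten gs ++ c) (v ++ v') = unzip2 (refine_cells gs v) ++ split_colors 0 c v'.
Proof.
elim: gs v => [|g gs IH] [|y v] //= /andP[/andP[gn gp] gg] [sg sv].
case: g gn gp sg => // x g _ /= /andP[x0 gp] sg.
rewrite -sg addKn -catA split_colors_group // IH // unzip2_cat unzip2_zip ?size_nseq //.
by rewrite catA.
Qed.

Lemma split_colors_flatten gs v : pos_groups gs -> map sumn gs = unzip1 v ->
  split_colors 0 (flatten gs) v = unzip2 (refine_cells gs v).
Proof. by move=> gg gm; have := split_colors_refine_cells [::] [::] gg gm; rewrite !cats0. Qed.

Lemma refinement_cat gs1 gs2 v1 v2 w1 w2 : refinement gs1 v1 w1 -> refinement gs2 v2 w2 ->
  refinement (gs1 ++ gs2) (v1 ++ v2) (w1 ++ w2).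
Proof.
case=> g1 s1 m1 r1 [g2 s2 m2 r2]; split.
- by rewrite /pos_groups all_cat; apply/andP.
- by rewrite !size_cat s1 s2.
- by rewrite map_cat m1 m2 unzip1_cat.
- by rewrite refine_cells_cat // r1 r2.
Qed.

Lemma refinement_catP gs v1 v2 w : refinement gs (v1 ++ v2) w ->
  exists gs1 gs2, [/\ refinement gs1 v1 (refine_cells gs1 v1),
    refinement gs2 v2 (refine_cells gs2 v2) & w = refine_cells gs1 v1 ++ refine_cells gs2 v2].
Proof.
case=> gg sz sm <-; rewrite size_cat in sz.
have s1 : size (take (size v1) gs) = size v1 by rewrite size_takel // sz leq_addr.
have s2 : size (drop (size v1) gs) = size v2 by rewrite size_drop sz addKn.
rewrite -(cat_take_drop (size v1) gs) in gg sm *.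
move: gg; rewrite /pos_groups all_cat => /andP[g1 g2].
move: sm; rewrite map_cat unzip1_cat => /eqP.
rewrite eqseq_cat ?size_map ?s1 // => /andP[/eqP m1 /eqP m2].
by exists (take (size v1) gs), (drop (size v1) gs); rewrite refine_cells_cat.
Qed.

Lemma pos_cells_refinement gs v w : refinement gs v w -> pos_cells v.
Proof.
case=> gg _ sm _; rewrite /pos_cells -(all_map fst (fun x => 0 < x)) -/(unzip1 v) -sm all_map.
apply/allP => g /(allP gg) /andP[]; case: g => //= x g _ /andP[x0 _]; lia.
Qed.

Lemma sumn_refinement gs v w : refinement gs v w -> sumn (unzip1 v) = sumn (unzip1 w).
Proof. by case=> _ sz <- <-; rewrite unzip1_refine_cells // sumn_flatten. Qed.

Lemma size_refinement gs v w : refinement gs v w -> size v <= size w.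
Proof.
case=> gg sz _ <-; elim: gs v gg sz => [|g gs IH] [|y v] //= /andP[/andP[gn _] gg].
by case=> /(IH _ gg); rewrite size_cat; case: g gn => //= x g _; lia.
Qed.

Lemma glue_refinement p : pos_cells p -> exists gs, refinement gs (glue p) p.
Proof.
elim: p => [|x s IH] /=; first by exists [::].
case/andP=> x0 /IH [gs [gg sz sm ce]].
case E: (glue s) sz sm ce => [|y r] sz sm ce.
  move: (glue_eq_nil s); rewrite E eqxx => /esym/eqP ->.
  by exists [:: [:: x.1]]; split => //=; rewrite ?x0 ?addn0 //; case: x {x0}.
case: ifP => yr.
  exists ([:: x.1] :: gs); split => //=; rewrite ?x0 ?addn0 ?sz ?sm ?ce //.
  by case: x {x0}.
case: gs gg sz sm ce => // g gs /andP[/andP[gn gp] gg] [sz] [sg sm] ce.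
exists ((x.1 :: g) :: gs); split => //=; rewrite ?x0 ?gn ?gp ?sz ?sm ?sg //.
by rewrite -ce /= yr /group_cells; case: g gn {gp sg ce} => // z g _; case: x {x0}.
Qed.

(* Glue each block of a glide: this yields an unsplit glide. *)
Fixpoint coarsen (a : seq nat) (w : seq cell) : seq cell :=
  if a is x :: a' then glue (take (block_size x w) w) ++ coarsen a' (drop (block_size x w) w)
  else [::].

Lemma coarsen_cat x a p q : pos_cells p -> block_ok x p -> head_black q ->
  coarsen (x :: a) (p ++ q) = glue p ++ coarsen a q.
Proof. by move=> pp bp hq /=; rewrite block_size_block // take_size_cat // drop_size_cat. Qed.

Lemma glue_block x p : block_ok x p ->
  block_ok x (glue p) /\ count (fun y => ~~ y.2) (glue p) = 1.
Proof.
move=> /and3P[pn pb /eqP psum].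
have gn : glue p != [::] by rewrite glue_eq_nil.
have gb : ~~ (head (0, true) (glue p)).2.
  by case: p pn pb {psum gn} => // y p _ yb; have [? [? ->]] := glue_head y p.
by rewrite /block_ok gn gb sumn_glue count_red_glue psum eqxx count_black_glue.
Qed.

Lemma coarsen_spec a w : pos_cells w -> blocks_ok a w ->
  [/\ blocks_ok a (coarsen a w), count (fun y => ~~ y.2) (coarsen a w) = size a
    & exists gs, refinement gs (coarsen a w) w].
Proof.
elim: a w => [|x a IH] w pw; first by move/eqP ->; split => //; exists [::].
case/blocks_ok_consP=> p [q [E bp bq]]; subst w.
move: pw; rewrite pos_cells_cat => /andP[pp pq].
have [Bq Cq [gq Rq]] := IH _ pq bq.
have [gp Rp] := glue_refinement pp.
have [Bp Cp] := glue_block bp.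
rewrite coarsen_cat //; last exact: blocks_ok_head_black bq.
split.
- by rewrite blocks_ok_cat //; [exact: pos_cells_refinement Rp | exact: blocks_ok_head_black Bq].
- by rewrite count_cat Cp Cq.
- by exists (gp ++ gq); apply: refinement_cat.
Qed.

Lemma count_black1_behead q : ~~ (head (0, true) q).2 ->
  count (fun y => ~~ y.2) q = 1 -> all snd (behead q).
Proof.
case: q => //= y q -> /= /eqP; rewrite eqSS eqn0Ngt -has_count => /hasPn h.
by apply/allP => z /h; rewrite negbK.
Qed.

Lemma refine_unsplit_block x q gs w : block_ok x q -> count (fun y => ~~ y.2) q = 1 ->
  refinement gs q w -> block_ok x w /\ glue w = q.
Proof.
move=> bq cq [gg sz sm <-]; move: (bq) => /and3P[qn qb /eqP qsum].
split.
- apply/and3P; split; first by rewrite refine_cells_eq_nil.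
  + by rewrite head_refine_cells.
  + by rewrite count_red_refine_cells // -qsum unzip1_refine_cells // sumn_flatten sm.
- by rewrite glue_refine_cells ?sm ?zip_unzip // (count_black1_behead qb cq).
Qed.

Lemma refine_coarsen a v gs w : refinement gs v w -> blocks_ok a v ->
  count (fun y => ~~ y.2) v = size a -> blocks_ok a w /\ coarsen a w = v.
Proof.
elim: a v gs w => [|x a IH] v gs w R.
  by move=> /eqP E _; subst v; case: R => _ + _ <-; case: gs.
case/blocks_ok_consP=> q [v' [E bq bv']]; subst v; rewrite count_cat => cnt.
have cq1 : 1 <= count (fun y => ~~ y.2) q.
  by move: bq => /and3P[]; case: (q) => //= y q0 _ ->.
have cv' := blocks_ok_count_black bv'; rewrite /= in cnt.
have cq : count (fun y => ~~ y.2) q = 1 by lia.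
have cv : count (fun y => ~~ y.2) v' = size a by lia.
have [gs1 [gs2 [R1 R2 ->]]] := refinement_catP R.
have [Bw1 Gw1] := refine_unsplit_block bq cq R1.
have [Bw2 Cw2] := IH _ _ _ R2 bv' cv.
have pw1 : pos_cells (refine_cells gs1 q) by case: R1 => gg _ _ _; apply: pos_cells_refine_cells.
have hb := blocks_ok_head_black Bw2.
by rewrite blocks_ok_cat // coarsen_cat // Gw1 Cw2.
Qed.

Definition nzcells (s : seq cell) := [seq y <- s | y.1 != 0].
Definition slice (s : seq cell) lo hi := take (hi - lo) (drop lo s).
Definition block_at x s lo hi := block_ok x (nzcells (slice s lo hi)).

(* The cuts [0 = i_0 < ... < i_l] of a glide of [0^(N - l) a], N = size s,
   for which the bound [i_j <= n_j] reads [i_j <= N - l + j]. *)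
Definition glide_cuts (a : seq nat) (s : seq cell) (cs : seq nat) :=
  [/\ size cs = (size a).+1, nth 0 cs 0 = 0,
    forall j, j < size a -> [/\ nth 0 cs j < nth 0 cs j.+1,
        nth 0 cs j.+1 <= size s - size a + j.+1
      & block_at (nth 0 a j) s (nth 0 cs j) (nth 0 cs j.+1)]
  & forall k, nth 0 cs (size a) <= k < size s -> (nth (0, false) s k).1 = 0].

Lemma pos_cells_nzcells s : pos_cells (nzcells s).
Proof. by apply/allP => y; rewrite mem_filter lt0n => /andP[]. Qed.

Lemma nzcells_cat s t : nzcells (s ++ t) = nzcells s ++ nzcells t.
Proof. exact: filter_cat. Qed.

Lemma size_nzcells s : size (nzcells s) <= size s.
Proof. by rewrite size_filter count_size. Qed.

Lemma nzcells_eq_nil s : (forall k, k < size s -> (nth (0, false) s k).1 = 0) -> nzcells s = [::].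
Proof.
move=> h; apply/eqP; rewrite -[_ == _]negbK -has_filter.
by apply/hasPn => y /(nthP (0, false)) [k kl <-]; rewrite h.
Qed.

Lemma nzcells_nil_nth s k : nzcells s = [::] -> (nth (0, false) s k).1 = 0.
Proof.
move=> h; case: (ltnP k (size s)) => ks; last by rewrite nth_default.
apply/eqP/negPn/negP => nz.
have : nth (0, false) s k \in nzcells s by rewrite mem_filter nz mem_nth.
by rewrite h.
Qed.

Lemma nzcells_catP s p q : nzcells s = p ++ q ->
  exists m, [/\ m <= size s, nzcells (take m s) = p & nzcells (drop m s) = q].
Proof.
elim: s p => [|y s IH] p /=.
  by case: p => // /esym/eqP; rewrite cat0s => /eqP ->; exists 0.
case: ifP => yz; last by move/IH => [m [ms e1 e2]]; exists m.+1; split => //=; rewrite yz.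
case: p => [|y' p] /=; first by move=> E; exists 0; rewrite take0 drop0 /= yz E.
by case=> <- /IH [m [ms e1 e2]]; exists m.+1; split => //=; rewrite yz e1.
Qed.

Lemma nth_increasing_mono (cs : seq nat) L : (forall j, j < L -> nth 0 cs j < nth 0 cs j.+1) ->
  forall i j, i <= j <= L -> nth 0 cs i <= nth 0 cs j.
Proof.
move=> h i j /andP[ij jL]; elim: j ij jL => [|j IH]; first by rewrite leqn0 => /eqP->.
rewrite leq_eqVlt => /orP[/eqP -> //|ij] jL.
exact: leq_trans (IH ij (ltnW jL)) (ltnW (h _ jL)).
Qed.

Lemma slice_drop s m lo hi : slice s (m + lo) (m + hi) = slice (drop m s) lo hi.
Proof. by rewrite /slice drop_drop subnDl addnC. Qed.

Lemma nth_shift_behead (cs : seq nat) m j : j < (size cs).-1 ->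
  nth 0 [seq y - m | y <- behead cs] j = nth 0 cs j.+1 - m.
Proof. by move=> h; rewrite (nth_map 0) ?size_behead // nth_behead. Qed.

Lemma glide_cuts_blocks_ok a s cs : size a <= size s -> glide_cuts a s cs ->
  blocks_ok a (nzcells s).
Proof.
elim: a s cs => [|x a IH] s cs sz [c1 c2 c3 c4].
  by rewrite nzcells_eq_nil //= => k ks; apply: c4; rewrite ks andbT c2.
set m := nth 0 cs 1.
have [m0 mb b0] := c3 0 erefl.
have mono := nth_increasing_mono (fun j h => let: And3 p _ _ := c3 j h in p).
have ms : m <= size s - size a by move: mb sz => /=; lia.
have mj j : 1 <= j <= size (x :: a) -> m <= nth 0 cs j by move=> h; apply: mono; lia.
have cuts : glide_cuts a (drop m s) [seq y - m | y <- behead cs].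
  split.
  - by rewrite size_map size_behead c1.
  - by rewrite nth_shift_behead ?c1 // subnn.
  - move=> j ja; have [h1 h2 h3] := c3 j.+1 ja.
    have mj1 := mj j.+1; have mj2 := mj j.+2.
    rewrite !nth_shift_behead ?c1 //=; try lia.
    split.
    + by move: h1 mj1 mj2 => /=; lia.
    + by move: h2 mj1 mj2 sz ja => /=; rewrite size_drop; lia.
    + move: h3; rewrite /block_at -(slice_drop s m) /=.
      by rewrite !subnKC //; [apply: mj2 | apply: mj1]; apply/andP; split => //=; lia.
  - move=> k; rewrite nth_shift_behead ?c1 // size_drop => /andP[k1 k2].
    rewrite nth_drop; apply: c4; move: k1 k2.
    by have := mj (size (x :: a)); move: sz => /=; lia.
have Ba : blocks_ok a (nzcells (drop m s)).
  by apply: (IH _ _ _ cuts); rewrite size_drop; move: ms sz => /=; lia.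
rewrite -(cat_take_drop m s) nzcells_cat blocks_ok_cat ?pos_cells_nzcells //.
  by move: b0; rewrite /block_at /slice c2 drop0 subn0.
exact: blocks_ok_head_black Ba.
Qed.

Lemma blocks_ok_glide_cuts a s : blocks_ok a (nzcells s) -> exists cs, glide_cuts a s cs.
Proof.
elim: a s => [|x a IH] s.
  by move=> /eqP h; exists [:: 0]; split => // k _ /=; apply: nzcells_nil_nth.
move=> /blocks_ok_consP [p [q [E bp bq]]].
have [m [ms e1 e2]] := nzcells_catP E.
have m0 : 0 < m by rewrite lt0n; apply/negP => /eqP m0; move: bp; rewrite -e1 m0 take0.
rewrite -e2 in bq; have szq := leq_trans (blocks_ok_size bq) (size_nzcells _).
have [cs [c1 c2 c3 c4]] := IH _ bq; rewrite size_drop in szq.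
exists (0 :: [seq y + m | y <- cs]); split.
- by rewrite /= size_map c1.
- by [].
- move=> [|j] /= ja.
  + rewrite (nth_map 0) ?c1 // c2 add0n; split => //; first by lia.
    by rewrite /block_at /slice drop0 subn0 e1.
  + rewrite !(nth_map 0) ?c1; try lia.
    have [h1 h2 h3] := c3 j ja.
    split; first by lia.
    * by move: h2; rewrite size_drop; lia.
    * by move: h3; rewrite /block_at -(slice_drop s m) ![m + _]addnC.
- move=> k; rewrite /= (nth_map 0) ?c1 // => /andP[k1 k2].
  have := c4 (k - m); rewrite nth_drop subnKC; last lia.
  by apply; rewrite size_drop; lia.
Qed.

Definition red_nonzero (s : seq cell) := all (fun y => y.2 ==> (y.1 != 0)) s.

Lemma big_nat_nth_slice (X : Type) (x0 : X) (F : X -> nat) (t : seq X) lo hi :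
  lo <= hi <= size t ->
  \sum_(lo <= k < hi) F (nth x0 t k) = sumn (map F (take (hi - lo) (drop lo t))).
Proof.
move=> /andP[]; elim: hi => [|hi IH].
  by rewrite leqn0 => /eqP -> _; rewrite big_geq // subnn take0.
rewrite leq_eqVlt => /orP[/eqP <- _|lh hs]; first by rewrite big_geq // subnn take0.
rewrite big_nat_recr //= IH //; last by lia.
rewrite subSn // (take_nth x0); last by rewrite size_drop; lia.
by rewrite -cats1 map_cat sumn_cat /= addn0 nth_drop subnKC.
Qed.

Lemma nth_unzip1 (s : seq cell) k : nth 0 (unzip1 s) k = (nth (0, false) s k).1.
Proof.
by case: (ltnP k (size s)) => h; [rewrite (nth_map (0, false)) | rewrite !nth_default ?size_map].
Qed.

Lemma nth_unzip2 (s : seq cell) k : nth false (unzip2 s) k = (nth (0, false) s k).2.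
Proof.
by case: (ltnP k (size s)) => h; [rewrite (nth_map (0, false)) | rewrite !nth_default ?size_map].
Qed.

Lemma sumn_nzcells t : sumn (unzip1 (nzcells t)) = sumn (unzip1 t).
Proof. by elim: t => //= y t IH; case: ifP => /= [_|/negbFE/eqP ->]; rewrite IH. Qed.

Lemma count_red_nzcells t : red_nonzero t -> count snd (nzcells t) = count snd t.
Proof.
elim: t => //= y t IH /andP[h /IH]; case: ifP => /= [_ -> //|/negbFE/eqP y0].
by move: h; rewrite y0 /=; case: y.2.
Qed.

Lemma blocksumE s lo hi : lo <= hi <= size s ->
  blocksum (unzip1 s) lo hi = sumn (unzip1 (nzcells (slice s lo hi))).
Proof.
move=> h; rewrite /blocksum (big_nat_nth_slice 0 id); last by rewrite size_map.
by rewrite map_id sumn_nzcells /slice /unzip1 map_take map_drop.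
Qed.

Lemma blockredE s lo hi : red_nonzero s -> lo <= hi <= size s ->
  blockred (unzip2 s) lo hi = count snd (nzcells (slice s lo hi)).
Proof.
move=> k h; rewrite /blockred (big_nat_nth_slice false nat_of_bool); last by rewrite size_map.
rewrite count_red_nzcells; last by apply/allP => y /mem_take /mem_drop; apply: (allP k).
by rewrite sumn_count /slice /unzip2 -map_drop -map_take count_map.
Qed.

Lemma head_filter_find (T : Type) (p : pred T) x0 t : has p t ->
  head x0 (filter p t) = nth x0 t (find p t).
Proof. by elim: t => //= y t IH; case: ifP => //= _ /IH. Qed.

Lemma nth_slice s lo hi i : i < hi - lo ->
  nth (0, false) (slice s lo hi) i = nth (0, false) s (lo + i).
Proof. by move=> h; rewrite /slice nth_take // nth_drop. Qed.

Lemma size_slice s lo hi : lo <= hi <= size s -> size (slice s lo hi) = hi - lo.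
Proof. by move=> h; rewrite /slice size_take size_drop; case: ltnP; lia. Qed.

Lemma first_nz_blackE s lo hi : lo <= hi <= size s -> nzcells (slice s lo hi) != [::] ->
  first_nz_black (unzip1 s) (unzip2 s) lo hi = ~~ (head (0, true) (nzcells (slice s lo hi))).2.
Proof.
move=> h ne; set sl := slice s lo hi.
have hs : has (fun y => y.1 != 0) sl by rewrite has_filter.
set f := find (fun y => y.1 != 0) sl.
have fs : f < size sl by rewrite -has_find.
have ssl := size_slice h; rewrite -/sl in ssl.
have k0s : lo + f < size (unzip1 s) by rewrite size_map; lia.
rewrite head_filter_find // (set_nth_default (0, false)) // nth_slice -?ssl //.
have nzf : (nth (0, false) s (lo + f)).1 != 0.
  rewrite -(@nth_slice s lo hi) -?ssl // -/sl (set_nth_default (0, true)) //.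
  exact: (nth_find (0, true) hs).
have bef k : lo <= k < lo + f -> (nth (0, false) s k).1 = 0.
  move=> /andP[k1 k2]; have := @before_find _ (0, false) (fun y => y.1 != 0) sl (k - lo).
  rewrite -/f nth_slice; last lia.
  by rewrite subnKC // => /(_ _)/negbFE/eqP; apply; lia.
apply/idP/idP.
  move/forallP => /(_ (Ordinal k0s)) /= /implyP; rewrite nth_unzip2; apply.
  rewrite nth_unzip1 nzf leq_addr /=; apply/andP; split; first by lia.
  by apply/forallP => k'; apply/implyP => kk; rewrite nth_unzip1 bef.
move=> hb; apply/forallP => k; apply/implyP => /and3P[/andP[k1 k2] nz /forallP hk].
rewrite nth_unzip1 in nz.
have e : nat_of_ord k = lo + f.
  case: (ltngtP k (lo + f)) => // kf; first by rewrite bef ?eqxx in nz; lia.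
  by have := hk (Ordinal k0s); rewrite /= nth_unzip1 (negbTE nzf) kf leq_addr.
by rewrite nth_unzip2 e.
Qed.

Lemma block_atE x s lo hi : 0 < x -> red_nonzero s -> lo <= hi <= size s ->
  (blocksum (unzip1 s) lo hi == x + blockred (unzip2 s) lo hi)
    && first_nz_black (unzip1 s) (unzip2 s) lo hi = block_at x s lo hi.
Proof.
move=> x0 k h; rewrite blocksumE // blockredE // /block_at /block_ok.
case: (boolP (nzcells (slice s lo hi) == [::])) => [/eqP E|ne].
  by rewrite E /=; case: x x0.
by rewrite first_nz_blackE // /= andbC.
Qed.

Lemma flat_zero_pad k a : all (fun x => 0 < x) a -> flat (nseq k 0 ++ a) = a.
Proof.
move=> ap; rewrite /flat filter_cat.
have -> : [seq x <- nseq k 0 | x != 0] = [::] by elim: k.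
by apply/all_filterP; apply: sub_all ap => x; rewrite lt0n.
Qed.

Lemma nzpos_zero_pad k a : all (fun x => 0 < x) a -> nzpos (nseq k 0 ++ a) = iota k (size a).
Proof.
move=> ap; rewrite /nzpos size_cat size_nseq iotaD filter_cat add0n.
have -> : [seq j <- iota 0 k | nth 0 (nseq k 0 ++ a) j != 0] = [::].
  apply/eqP; rewrite -[_ == _]negbK -has_filter; apply/hasPn => j.
  by rewrite mem_iota add0n => /andP[_ jk]; rewrite nth_cat size_nseq jk nth_nseq jk eqxx.
apply/all_filterP/allP => j; rewrite mem_iota => /andP[j1 j2].
rewrite nth_cat size_nseq ltnNge j1 /= -lt0n.
have h : j - k < size a by lia.
exact: (allP ap _ (mem_nth 0 h)).
Qed.

Section PaddedGlide.
Variables (a : seq nat) (s : seq cell).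
Hypotheses (ap : all (fun x => 0 < x) a) (sz : size a <= size s) (rn : red_nonzero s).

Let a' := nseq (size s - size a) 0 ++ a.

Let size_flat : size (flat a') = size a.
Proof. by rewrite flat_zero_pad. Qed.

Let nth_flat j : nth 0 (flat a') j = nth 0 a j.
Proof. by rewrite flat_zero_pad. Qed.

Let size_padded : size a' = size s.
Proof. by rewrite size_cat size_nseq; lia. Qed.

Let nth_nzpos j : j < size a -> nth 0 (nzpos a') j = size s - size a + j.
Proof. by move=> ja; rewrite nzpos_zero_pad // nth_iota. Qed.

Let pos_nth j : j < size a -> 0 < nth 0 a j.
Proof. by move=> ja; apply: (allP ap); apply: mem_nth. Qed.

Lemma glide_cuts_of_glide : glide a' (unzip1 s) (unzip2 s) -> exists cs, glide_cuts a s cs.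
Proof.
case/existsP => i /and5P[/eqP h0 /forallP h1 /forallP h2 /forallP h3 /forallP h4].
set I := fun j => nat_of_ord (i (inord j)).
exists [seq I j | j <- iota 0 (size a).+1].
have nI j : j <= size a -> nth 0 [seq I j | j <- iota 0 (size a).+1] j = I j.
  by move=> jl; rewrite (nth_map 0) ?size_iota // nth_iota.
have IN j : I j <= size s by rewrite -size_padded -ltnS; exact: ltn_ord.
split.
- by rewrite size_map size_iota.
- by rewrite nI.
- move=> j ja; rewrite !nI //; last lia.
  have jl : j < size (flat a') by rewrite size_flat.
  have := h1 (Ordinal jl); have := h2 (Ordinal jl); have := h4 (Ordinal jl).
  rewrite /= nth_flat nth_nzpos // => hb lt le; rewrite /I; split => //; first by rewrite addnS.
  by rewrite -block_atE ?pos_nth // (ltnW le) IN.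
- move=> k; rewrite nI // => /andP[k1 k2].
  have kN : k < size a' by rewrite size_padded.
  move: k1; rewrite /I -{1}size_flat => k1.
  by have := h3 (Ordinal kN); rewrite /= k1 /= nth_unzip1 => /eqP.
Qed.

Lemma glide_of_glide_cuts cs : glide_cuts a s cs -> glide a' (unzip1 s) (unzip2 s).
Proof.
move=> [c1 c2 c3 c4].
have csN j : nth 0 cs j <= size s.
  case: j => [|j]; first by rewrite c2.
  case: (ltnP j (size a)) => ja; first by have [_ h _] := c3 j ja; lia.
  by rewrite nth_default // c1.
set i := [ffun j : 'I_(size (flat a')).+1 => (inord (nth 0 cs j) : 'I_(size a').+1)].
have Iv j : j <= size (flat a') -> nat_of_ord (i (inord j)) = nth 0 cs j.
  by move=> jl; rewrite ffunE inordK // inordK // size_padded ltnS.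
apply/existsP; exists i; apply/and5P; split.
- by rewrite Iv // c2.
- apply/forallP => j; rewrite !Iv //; last exact: ltnW.
  by have [] := c3 j; rewrite -size_flat.
- apply/forallP => j; rewrite !Iv // nth_nzpos -?size_flat //.
  by have [] := c3 j; rewrite -size_flat // => _ h _; lia.
- apply/forallP => k; rewrite Iv // size_flat; apply/implyP => k1.
  by rewrite nth_unzip1 c4 // k1 -size_padded /=.
- apply/forallP => j; rewrite !Iv //; last exact: ltnW.
  have ja : j < size a by rewrite -size_flat.
  rewrite nth_flat block_atE ?pos_nth //; first by have [] := c3 j.
  by have [h1 _ _] := c3 j ja; rewrite csN andbT; lia.
Qed.

Lemma glide_paddedE : glide a' (unzip1 s) (unzip2 s) = blocks_ok a (nzcells s).
Proof.
apply/idP/idP => [/glide_cuts_of_glide [cs] | /blocks_ok_glide_cuts [cs]].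
  exact: glide_cuts_blocks_ok.
exact: glide_of_glide_cuts.
Qed.

End PaddedGlide.

Lemma glide_zero_padE n a s : all (fun x => 0 < x) a -> size a <= n -> red_nonzero s ->
  size s = n -> glide (nseq (n - size a) 0 ++ a) (unzip1 s) (unzip2 s) = blocks_ok a (nzcells s).
Proof. by move=> ap an rn sn; subst n; apply: glide_paddedE. Qed.

Lemma kompo_cellsE N s : kompo N (unzip1 s) (unzip2 s) = (size s == N) && red_nonzero s.
Proof.
rewrite /kompo !size_map andbA andbb; case: eqP => //= <-.
apply/forallP/allP => [h y /(nthP (0, false)) [k ks <-]|h k].
  by have := h (Ordinal ks); rewrite /= nth_unzip2 nth_unzip1.
by rewrite nth_unzip2 nth_unzip1; apply: h; apply: mem_nth.
Qed.

Lemma sum_nth_count (T : Type) (x0 : T) (P : pred T) s :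
  \sum_(k < size s) P (nth x0 s k) = count P s.
Proof.
rewrite -(big_mkord xpredT (fun k => P (nth x0 s k) : nat)).
rewrite -(big_nth x0 xpredT (fun y => P y : nat)) -sum1_count [RHS]big_mkcond.
by apply: eq_bigr => y _; case: (P y).
Qed.

Definition zeros_left (s : seq cell) := [forall k : 'I_(size s), forall k' : 'I_(size s),
  ((k < k') && ((nth (0, false) s k).1 != 0)) ==> ((nth (0, false) s k').1 != 0)].

Lemma is_unsplitE a' s : size a' = size s ->
  is_unsplit a' (unzip1 s) (unzip2 s) =
  (count (fun y => ~~ y.2) (nzcells s) == size (flat a')) && zeros_left s.
Proof.
move=> za; rewrite /is_unsplit za; congr (_ && _).
  rewrite (eq_bigr (fun k : 'I_(size s) =>
    nat_of_bool ((fun y => (y.1 != 0) && ~~ y.2) (nth (0, false) s k)))).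
    rewrite (sum_nth_count (0, false) (fun y => (y.1 != 0) && ~~ y.2)) count_filter.
    congr (_ == _).
    by apply: eq_count => y /=; rewrite andbC.
  by move=> k _; rewrite nth_unzip1 nth_unzip2.
by apply: eq_forallb => k; apply: eq_forallb => k'; rewrite !nth_unzip1.
Qed.

Definition zpad n (v : seq cell) := nseq (n - size v) (0, false) ++ v.

Lemma size_zpad n v : size v <= n -> size (zpad n v) = n.
Proof. by rewrite size_cat size_nseq; lia. Qed.

Lemma nzcells_zpad n v : pos_cells v -> nzcells (zpad n v) = v.
Proof.
move=> pv; rewrite /zpad nzcells_cat (_ : nzcells (nseq _ _) = [::]); last by elim: (n - size v).
by apply/all_filterP; apply: sub_all pv => y; rewrite lt0n.
Qed.

Lemma red_nonzero_zpad n v : pos_cells v -> red_nonzero (zpad n v).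
Proof.
move=> pv; rewrite /red_nonzero all_cat; apply/andP; split; first by elim: (n - size v).
by apply: sub_all pv => y /= h; apply/implyP; rewrite -lt0n.
Qed.

Lemma count_red_zpad n v : count snd (zpad n v) = count snd v.
Proof. by rewrite count_cat; elim: (n - size v). Qed.

Lemma zeros_left_zpad s : red_nonzero s -> zeros_left s -> s = zpad (size s) (nzcells s).
Proof.
move=> k /forallP h; set z := find (fun y => y.1 != 0) s.
have hz1 : z < size s -> (nth (0, false) s z).1 != 0.
  by move=> zs; apply: (nth_find (0, false) (a := fun y => y.1 != 0)); rewrite has_find.
have hz2 i : i < z -> (nth (0, false) s i).1 == 0.
  by move=> iz; apply/negbFE; apply: (before_find (0, false) iz).
clearbody z.
have dz : all (fun y => y.1 != 0) (drop z s).
  apply/allP => y /(nthP (0, false)) [i]; rewrite size_drop nth_drop => iz <-.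
  case: (ltnP z (size s)) => zs; last by move: iz; rewrite (eqP (_ : size s - z == 0)) // subn_eq0.
  case: i iz => [|i] iz; first by rewrite addn0 hz1.
  have zi : z + i.+1 < size s by rewrite -ltn_subRL.
  have /forallP /(_ (Ordinal zi)) := h (Ordinal zs).
  by rewrite /= hz1 // andbT addnS ltnS leq_addr.
have tz : all (pred1 (0, false)) (take z s).
  apply/allP => y /(nthP (0, false)) [i]; rewrite size_take => iz <-.
  have iz' : i < z by move: iz; case: (ltnP z (size s)) => zs /= iz; lia.
  have /(allP k) := mem_nth (0, false) (leq_trans iz (geq_minr _ _)).
  rewrite nth_take //; move: (hz2 _ iz').
  by case: (nth _ s i) => x b /= /eqP -> /=; case: b.
have nz : nzcells s = drop z s.
  rewrite -{1}(cat_take_drop z s) nzcells_cat (_ : nzcells (take z s) = [::]).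
    exact/all_filterP.
  by apply/eqP; rewrite -[_ == _]negbK -has_filter; apply/hasPn => y /(allP tz) /eqP ->.
rewrite /zpad nz size_drop (_ : size s - (size s - z) = size (take z s)).
  by rewrite -{1}(cat_take_drop z s); congr (_ ++ _); apply/all_pred1P.
by rewrite size_take; case: (ltnP z (size s)); lia.
Qed.

Lemma zpad_zeros_left n v : pos_cells v -> size v <= n -> zeros_left (zpad n v).
Proof.
move=> pv sv; apply/forallP => i; apply/forallP => j; apply/implyP => /andP[ij].
rewrite /zpad !nth_cat size_nseq.
case: ltnP => ii; first by rewrite nth_nseq ii.
rewrite ltnNge (leq_trans ii (ltnW ij)) /= => _.
rewrite size_cat size_nseq subnK // in i j ij ii *.
have jv : j - (n - size v) < size v by have := ltn_ord j; lia.
by have /(allP pv) := mem_nth (0, false) jv; rewrite lt0n.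
Qed.

Lemma zeros_leftE s : red_nonzero s -> zeros_left s = (s == zpad (size s) (nzcells s)).
Proof.
move=> rn; apply/idP/eqP => [|->]; first exact: zeros_left_zpad.
by apply: zpad_zeros_left; [exact: pos_cells_nzcells | exact: size_nzcells].
Qed.

Lemma refinesP c al : reflect
  (exists gs : seq (seq nat), [/\ all (fun g => g != [::]) gs, flatten gs = c & map sumn gs = al])
  (refines c al).
Proof.
apply: (iffP existsP).
  case=> sh /and3P[sp /eqP ss /eqP sm]; exists (reshape (map (@nat_of_ord _) sh) c).
  have shape_sh : shape (reshape (map (@nat_of_ord _) sh) c) = map (@nat_of_ord _) sh.
    by apply: reshapeKl; rewrite ss.
  split => //; last by rewrite reshapeKr // ss.
  apply/allP => g gi; rewrite -size_eq0 -lt0n.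
  by apply: (allP sp); rewrite -shape_sh; apply: map_f.
case=> gs [gn gf gm].
have le : all (fun k => k < (size c).+1) (shape gs).
  apply/allP => k /mapP [g gi ->]; rewrite ltnS -gf size_flatten.
  elim: gs gi {gn gf gm} => //= g' gs IH; rewrite inE => /orP[/eqP ->|/IH]; lia.
set sh := map (fun k => inord k : 'I_(size c).+1) (shape gs).
have sz : size sh == size al by rewrite !size_map -gm size_map.
exists (Tuple sz) => /=.
have -> : map (@nat_of_ord _) sh = shape gs.
  rewrite -map_comp -[RHS]map_id; apply/eq_in_map => k kin /=.
  by rewrite inordK // -ltnS; apply: (allP le).
apply/and3P; split.
- by rewrite /shape all_map; apply/allP => g gi /=; rewrite lt0n size_eq0 (allP gn).
- by rewrite -size_flatten gf.
- by rewrite -gf flattenK gm.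
Qed.

Fixpoint expand_colors (e : seq nat) (g : seq bool) : seq bool :=
  if e is x :: e' then
    if x == 0 then false :: expand_colors e' g
    else head false g :: expand_colors e' (behead g)
  else [::].

Lemma size_expand_colors e g : size (expand_colors e g) = size e.
Proof. by elim: e g => //= x e IH g; case: ifP => _ /=; rewrite IH. Qed.

Lemma flat_unzip1 s : flat (unzip1 s) = unzip1 (nzcells s).
Proof. by elim: s => //= y s IH; rewrite /flat /= -/(flat _) IH; case: ifP. Qed.

Lemma unzip1_nzcells_zip e col : size e = size col -> unzip1 (nzcells (zip e col)) = flat e.
Proof. by move=> h; rewrite -flat_unzip1 unzip1_zip // h. Qed.

Lemma expand_colors_nzcells e col : size e = size col -> red_nonzero (zip e col) ->
  expand_colors e (unzip2 (nzcells (zip e col))) = col.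
Proof.
elim: e col => [|x e IH] [|b col] //= [sz] /andP[hb k].
case: eqP => [x0|/eqP x0] /=; last by rewrite IH.
by move: hb; rewrite x0 /=; case: b => //= _; rewrite IH.
Qed.

Lemma nzcells_expand_colors e g : size g = size (flat e) ->
  nzcells (zip e (expand_colors e g)) = zip (flat e) g.
Proof.
elim: e g => [|x e IH] g //=; first by case: g.
rewrite /flat /=; case: eqP => [x0|/eqP x0] /=; first by rewrite x0 eqxx /= => /IH.
by case: g => //= b g [/IH ->]; rewrite x0.
Qed.

Lemma red_nonzero_expand_colors e g : red_nonzero (zip e (expand_colors e g)).
Proof.
elim: e g => //= x e IH g.
by case: eqP => [x0|/eqP x0] /=; rewrite IH ?andbT //; apply/implyP.
Qed.

Lemma count_expand_colors e g : size g = size (flat e) ->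
  count id (expand_colors e g) = count id g.
Proof.
elim: e g => [|x e IH] g /=; first by case: g.
rewrite /flat /=; case: eqP => [x0|/eqP x0] /=; first by move/IH.
by case: g => //= b g [/IH ->].
Qed.

Lemma pos_flat e : all (fun x => 0 < x) (flat e).
Proof. by apply/allP => x; rewrite mem_filter lt0n => /andP[]. Qed.

Lemma pos_groupsE gs : pos_groups gs =
  all (fun g => g != [::]) gs && all (fun x => 0 < x) (flatten gs).
Proof.
elim: gs => //= g gs ->.
by rewrite all_cat -!andbA; congr (_ && _); rewrite andbCA.
Qed.

Definition cells_of S n (t : n.-tuple ('I_S.+1 * bool)) : seq cell :=
  [seq (nat_of_ord p.1, p.2) | p <- t].

Section TupleCells.
Variables (S n : nat) (t : n.-tuple ('I_S.+1 * bool)).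

Lemma size_cells_of : size (cells_of t) = n.
Proof. by rewrite size_map size_tuple. Qed.

Lemma unzip1_cells_of : map (fun p => nat_of_ord p.1) t = unzip1 (cells_of t).
Proof. by rewrite /unzip1 -map_comp. Qed.

Lemma unzip2_cells_of : map snd t = unzip2 (cells_of t).
Proof. by rewrite /unzip2 -map_comp. Qed.

End TupleCells.

Lemma cells_of_inj S n : injective (@cells_of S n).
Proof.
move=> t1 t2 h; apply: val_inj; apply: (inj_map _ h) => [[x1 b1] [x2 b2]] /= [/val_inj -> ->].
by [].
Qed.

Definition unsplit_glide_tuple a S n (t : n.-tuple ('I_S.+1 * bool)) :=
  let b := map (fun p => nat_of_ord p.1) t in
  let col := map snd t in
  let a' := nseq (n - size a) 0 ++ a in
  [&& kompo n b col, glide a' b col & is_unsplit a' b col].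

Definition glide_coloring a n e (col : n.-tuple bool) :=
  kompo n e col && glide (nseq (n - size a) 0 ++ a) e col.

Section GlideTuples.
Variables (a : seq nat) (n : nat).
Hypotheses (ap : all (fun x => 0 < x) a) (an : size a <= n).

Lemma unsplit_glide_tupleE S (t : n.-tuple ('I_S.+1 * bool)) :
  unsplit_glide_tuple a t =
  [&& red_nonzero (cells_of t), blocks_ok a (nzcells (cells_of t)),
      count (fun y => ~~ y.2) (nzcells (cells_of t)) == size a
    & cells_of t == zpad n (nzcells (cells_of t))].
Proof.
rewrite /unsplit_glide_tuple /= unzip1_cells_of unzip2_cells_of kompo_cellsE size_cells_of eqxx /=.
case: (boolP (red_nonzero (cells_of t))) => //= rn.
rewrite glide_zero_padE ?size_cells_of // is_unsplitE; last first.
  by rewrite size_cat size_nseq size_cells_of; lia.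
by rewrite flat_zero_pad // zeros_leftE // size_cells_of.
Qed.

Lemma glide_coloringE e (col : n.-tuple bool) : size e = n ->
  glide_coloring a e col = red_nonzero (zip e col) && blocks_ok a (nzcells (zip e col)).
Proof.
move=> se; have sz : size e = size col by rewrite size_tuple.
have sn : size (zip e col) = n by rewrite size_zip -sz minnn.
have e1 : unzip1 (zip e col) = e by rewrite unzip1_zip // sz.
have e2 : unzip2 (zip e col) = col by rewrite unzip2_zip // sz.
have -> : glide_coloring a e col =
    kompo n (unzip1 (zip e col)) (unzip2 (zip e col))
    && glide (nseq (n - size a) 0 ++ a) (unzip1 (zip e col)) (unzip2 (zip e col)).
  by rewrite e1 e2.
rewrite kompo_cellsE sn eqxx /=; case: (boolP (red_nonzero _)) => //= rn.
exact: glide_zero_padE.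
Qed.

End GlideTuples.

Section ColoringBijection.
Variables (a : seq nat) (n : nat) (e : seq nat).
Hypotheses (ap : all (fun x => 0 < x) a) (an : size a <= n) (se : size e = n).
Local Notation S := (sumn a + n).

(* The sizes always match, so the [insubd] defaults are never used. *)
Definition coloring_of (t : n.-tuple ('I_S.+1 * bool)) : n.-tuple bool :=
  insubd (nseq_tuple n false)
    (expand_colors e (split_colors 0 (flat e) (nzcells (cells_of t)))).

Definition unsplit_of (col : n.-tuple bool) : n.-tuple ('I_S.+1 * bool) :=
  insubd (nseq_tuple n (ord0, false))
    (map (fun y => (inord y.1, y.2)) (zpad n (coarsen a (nzcells (zip e col))))).

Lemma val_coloring_of t :
  val (coloring_of t) = expand_colors e (split_colors 0 (flat e) (nzcells (cells_of t))).
Proof. by rewrite /coloring_of val_insubd size_expand_colors se eqxx. Qed.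

Lemma cells_of_insubd (w : seq cell) : size w = n -> (forall y, y \in w -> y.1 <= S) ->
  cells_of (insubd (nseq_tuple n (ord0, false))
             (map (fun y => (inord y.1, y.2) : 'I_S.+1 * bool) w) : n.-tuple _) = w.
Proof.
move=> sw hb; rewrite /cells_of val_insubd size_map sw eqxx.
rewrite -map_comp -[RHS]map_id; apply/eq_in_map => y yi /=.
by rewrite inordK ?ltnS ?hb //; case: y yi.
Qed.

Lemma cells_of_unsplit_of (col : n.-tuple bool) : blocks_ok a (nzcells (zip e col)) ->
  cells_of (unsplit_of col) = zpad n (coarsen a (nzcells (zip e col))).
Proof.
set w := nzcells (zip e col) => bw; have pw : pos_cells w := pos_cells_nzcells _.
have [_ _ [gs R]] := coarsen_spec pw bw.
have szw : size w <= n by rewrite (leq_trans (size_nzcells _)) // size_zip se size_tuple minnn.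
have szc := leq_trans (size_refinement R) szw.
apply: cells_of_insubd; first exact: size_zpad.
move=> y; rewrite mem_cat => /orP[/nseqP [-> _] //|yc].
have : y.1 <= sumn (unzip1 (coarsen a w)).
  by move: yc; elim: (coarsen a w) => //= z c IH; rewrite inE => /orP[/eqP ->|/IH]; lia.
rewrite (sumn_refinement R) (blocks_ok_sumn pw bw) => /leq_trans; apply.
by rewrite leq_add2l (leq_trans (count_size _ _)).
Qed.

Lemma coloring_of_unsplit_of (col : n.-tuple bool) : glide_coloring a e col ->
  coloring_of (unsplit_of col) = col.
Proof.
rewrite glide_coloringE // => /andP[rn bw].
have [_ _ [gs R]] := coarsen_spec (pos_cells_nzcells _) bw; case: (R) => gg gsz gsm gsc.
have sz : size e = size col by rewrite se size_tuple.
apply: val_inj; rewrite val_coloring_of cells_of_unsplit_of // nzcells_zpad //.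
  rewrite -(unzip1_nzcells_zip sz) -{1}gsc unzip1_refine_cells // split_colors_flatten //.
  by rewrite gsc expand_colors_nzcells.
exact: pos_cells_refinement R.
Qed.

Lemma unsplit_of_glide_coloring (col : n.-tuple bool) : glide_coloring a e col ->
  unsplit_glide_tuple a (unsplit_of col)
  && refines (flat e) (flat (map (fun p => nat_of_ord p.1) (unsplit_of col))).
Proof.
rewrite glide_coloringE // => /andP[rn bw].
have [Bc Cc [gs R]] := coarsen_spec (pos_cells_nzcells _) bw; case: (R) => gg gsz gsm gsc.
have pc := pos_cells_refinement R.
have sz : size e = size col by rewrite se size_tuple.
rewrite unsplit_glide_tupleE // cells_of_unsplit_of // nzcells_zpad // red_nonzero_zpad //.
rewrite Bc Cc !eqxx unzip1_cells_of cells_of_unsplit_of // flat_unzip1 nzcells_zpad //=.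
apply/refinesP; exists gs; split => //; first by move: gg; rewrite pos_groupsE => /andP[].
by rewrite -(unzip1_nzcells_zip sz) -gsc unzip1_refine_cells.
Qed.

Lemma unsplit_glide_tuple_refinement (t : n.-tuple ('I_S.+1 * bool)) :
  unsplit_glide_tuple a t && refines (flat e) (flat (map (fun p => nat_of_ord p.1) t)) ->
  let v := nzcells (cells_of t) in
  exists gs, [/\ refinement gs v (refine_cells gs v), flatten gs = flat e,
     val (coloring_of t) = expand_colors e (unzip2 (refine_cells gs v)),
     blocks_ok a v & count (fun y => ~~ y.2) v = size a /\ cells_of t = zpad n v].
Proof.
rewrite unsplit_glide_tupleE // => /andP[/and4P[rn bv /eqP cb /eqP zs]].
rewrite unzip1_cells_of flat_unzip1 => /refinesP [gs [gn gf gm]].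
have gg : pos_groups gs by rewrite pos_groupsE gn gf pos_flat.
have gsz : size gs = size (nzcells (cells_of t)) by rewrite -(size_map sumn) gm size_map.
exists gs; split => //.
by rewrite val_coloring_of -gf split_colors_flatten.
Qed.

Lemma coloring_of_glide (t : n.-tuple ('I_S.+1 * bool)) :
  unsplit_glide_tuple a t && refines (flat e) (flat (map (fun p => nat_of_ord p.1) t)) ->
  glide_coloring a e (coloring_of t) && (unsplit_of (coloring_of t) == t).
Proof.
move/unsplit_glide_tuple_refinement => [gs [R gf vc bv [cb zs]]].
have [Bw Cw] := refine_coarsen R bv cb.
case: (R) => gg gsz gm _.
have nz : nzcells (zip e (coloring_of t)) = refine_cells gs (nzcells (cells_of t)).
  rewrite vc nzcells_expand_colors; first by rewrite -gf -(unzip1_refine_cells gsz) zip_unzip.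
  by rewrite size_map -gf -(unzip1_refine_cells gsz) size_map.
have gc : glide_coloring a e (coloring_of t).
  by rewrite glide_coloringE // nz Bw andbT vc red_nonzero_expand_colors.
rewrite gc /=; apply/eqP/cells_of_inj.
by rewrite cells_of_unsplit_of ?nz // Cw -zs.
Qed.

Lemma ex_coloring_of (t : n.-tuple ('I_S.+1 * bool)) :
  unsplit_glide_tuple a t && refines (flat e) (flat (map (fun p => nat_of_ord p.1) t)) ->
  ex (coloring_of t) = ex (map snd t).
Proof.
move/unsplit_glide_tuple_refinement => [gs [R gf vc _ [_ zs]]]; case: (R) => gg gsz _ _.
rewrite /ex vc count_expand_colors; last first.
  by rewrite size_map -gf -(unzip1_refine_cells gsz) size_map.
rewrite /unzip2 count_map (count_red_refine_cells gg gsz) unzip2_cells_of /unzip2 count_map.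
by rewrite -(count_red_zpad n) -zs.
Qed.

End ColoringBijection.

Lemma size_monomial n idx es : size (monomial n idx es) = n.
Proof. by rewrite size_map size_iota. Qed.

Lemma flat_monomial n idx es : size idx = size es -> all (fun e => 0 < e) es ->
  sorted ltn idx -> all (fun k => k < n) idx -> flat (monomial n idx es) = es.
Proof.
move=> sz ep so al; set f := fun k => if k \in idx then nth 0 es (index k idx) else 0.
have fin k : k \in idx -> 0 < f k.
  by move=> ki; rewrite /f ki; apply: (allP ep); apply: mem_nth; rewrite -sz index_mem.
rewrite /flat /monomial -/f filter_map.
have -> : [seq k <- iota 0 n | preim f (fun x => x != 0) k] = idx.
  apply: (@irr_sorted_eq _ ltn ltn_trans ltnn) => //.
    by apply: (sorted_filter ltn_trans); exact: iota_ltn_sorted.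
  move=> k; rewrite mem_filter mem_iota /= add0n.
  case ki: (k \in idx); first by rewrite -lt0n fin // (allP al).
  by rewrite /f ki eqxx.
have uq : uniq idx := sorted_uniq ltn_trans ltnn so.
apply: (@eq_from_nth _ 0); first by rewrite size_map.
by move=> i; rewrite size_map => ii; rewrite (nth_map 0) // /f mem_nth // index_uniq.
Qed.

Import GRing.Theory.
Local Open Scope ring_scope.

Lemma G_coef_unsplit_expansion (R : comNzRingType) (beta : R) a n :
  all (fun x => 0 < x)%N a -> (size a <= n)%N -> forall e,
  G_coef beta a n e =
  \sum_(t : n.-tuple ('I_(sumn a + n).+1 * bool) | unsplit_glide_tuple a t)
     beta ^+ ex (map snd t) * F_coef R (flat (map (fun p => nat_of_ord p.1) t)) n e.
Proof.
move=> ap an e; rewrite /G_coef an /calG_coef.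
have : size (nseq (n - size a) 0%N ++ a) = n by rewrite size_cat size_nseq subnK.
move: (size _) => N NE; subst N.
have [se|se] := eqVneq (size e) n; last first.
  rewrite big_pred0; last by move=> c; rewrite /kompo (negbTE se).
  by rewrite big1 // => t _; rewrite /F_coef (negbTE se) mulr0.
under [RHS]eq_bigr => t _ do rewrite /F_coef se eqxx /= mulr_natr mulrb.
rewrite -big_mkcondr (reindex_onto (@coloring_of a n e) (@unsplit_of a n e)); last first.
  by move=> c; apply: coloring_of_unsplit_of.
apply: eq_big => t.
  apply/idP/idP; last exact: coloring_of_glide.
  by case/andP => gc /eqP E; have := unsplit_of_glide_coloring ap an se gc; rewrite E.
case/andP => gc /eqP E; have := unsplit_of_glide_coloring ap an se gc; rewrite E => H.
by rewrite (ex_coloring_of ap an se H).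
Qed.

Theorem mainTheorem7 (R : comNzRingType) (beta : R) (a : seq nat) (n : nat) :
  all (fun x => 0 < x)%N a -> (size a <= n)%N ->
  (forall e : seq nat,
     G_coef beta a n e =
     \sum_(t : n.-tuple ('I_(sumn a + n).+1 * bool) |
             let b := map (fun p => nat_of_ord p.1) t in
             let col := map snd t in
             let a' := nseq (n - size a) 0%N ++ a in
             [&& kompo n b col, glide a' b col & is_unsplit a' b col])
        beta ^+ ex (map snd t) *
        F_coef R (flat (map (fun p => nat_of_ord p.1) t)) n e)
  /\ quasisymmetric n (G_coef beta a n).
Proof.
move=> ap an; split; first exact: G_coef_unsplit_expansion.
move=> idx idx' es s1 s2 esp so1 so2 al1 al2.
rewrite !(G_coef_unsplit_expansion beta ap an); apply: eq_bigr => t _; congr (_ * _).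
by rewrite /F_coef !size_monomial !flat_monomial.
Qed.
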